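(* Let $G=G_1\times\dots\times G_n$ be a finite group, where the subgroups $G_1,\ldots,G_n$ have pairwise coprime orders. For $\ell\in\mathbb{N}$, the group $G$ is $\ell$-tuple regular if and only if each of $G_1,\ldots,G_n$ is $\ell$-tuple regular.
   Context: For $\ell\in\mathbb{N}$, a finite group $G$ is $\ell$-tuple regular if for all tuples $(g_1,\ldots,g_\ell),(h_1,\ldots,h_\ell)\in G^\ell$ (entries may repeat) for which $g_i\mapsto h_i$ defines an isomorphism $\langle g_1,\ldots,g_\ell\rangle\to\langle h_1,\ldots,h_\ell\rangle$, there exists a bijection $\Psi\colon G\to G$ such that for every $g\in G$ the assignment $g_1\mapsto h_1,\ldots,g_\ell\mapsto h_\ell,g\mapsto\Psi(g)$ defines an isomorphism $\langle g_1,\ldots,g_\ell,g\rangle\to\langle h_1,\ldots,h_\ell,\Psi(g)\rangle$. *)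

From mathcomp Require Import all_boot all_fingroup all_solvable.
Set Implicit Arguments. Unset Strict Implicit. Unset Printing Implicit Defensive.
Import GroupScope.

Section TupleRegular.
Variable gT : finGroupType.

Definition gen_of (k : nat) (x : 'I_k -> gT) : {group gT} :=
  <<[set x i | i : 'I_k]>>%G.

Definition assign_iso (k : nat) (x y : 'I_k -> gT) : Prop :=
  exists f : {morphism gen_of x >-> gT},
    isom (gen_of x) (gen_of y) f /\ forall i, f (x i) = y i.

Definition ext (k : nat) (x : 'I_k -> gT) (g : gT) : 'I_k.+1 -> gT :=
  fun i => if unlift ord_max i is Some j then x j else g.

Definition tuple_regular (l : nat) (G : {group gT}) : Prop :=
  forall x y : 'I_l -> gT,
    (forall i, x i \in G) -> (forall i, y i \in G) ->
    assign_iso x y ->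
    exists Psi : gT -> gT,
      [/\ Psi @: G = G, {in G &, injective Psi} &
          forall g, g \in G -> assign_iso (ext x g) (ext y (Psi g))].

End TupleRegular.

From mathcomp Require Import all_boot all_fingroup all_solvable.
Set Implicit Arguments. Unset Strict Implicit. Unset Printing Implicit Defensive.
Import GroupScope.

(* With pi the primes of #|A|, an element of G = A \x B lies in A iff it is a
   pi-element, and x_i |-> y_i extends to an isomorphism iff it does so on the
   pi-parts and on the pi'-parts separately (the two isomorphisms glue along
   the direct product).  Hence bijections Psi_A, Psi_B witnessing regularity of
   A and B combine into g |-> Psi_A(g_pi) Psi_B(g_pi'); conversely a bijection
   witnessing regularity of G preserves element orders, so it maps A onto A. *)

Section AssignIso.
Variable gT : finGroupType.
Implicit Types (D S : {group gT}).

Lemma gen_of_subG k (x : 'I_k -> gT) S :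
  (forall i, x i \in S) -> gen_of x \subset S.
Proof. by move=> xS; rewrite gen_subG; apply/subsetP => _ /imsetP[i _ ->]. Qed.

Lemma mem_gen_of k (x : 'I_k -> gT) i : x i \in gen_of x.
Proof. by rewrite mem_gen // imset_f. Qed.

Lemma assign_isoP k (x y : 'I_k -> gT) :
  assign_iso x y <-> exists D (f : {morphism D >-> gT}),
    [/\ 'injm f, forall i, x i \in D & forall i, f (x i) = y i].
Proof.
split=> [[f [/isomP[injf _] fx]] | [D [f [injf xD fx]]]].
  by exists (gen_of x), f; split=> // i; apply: mem_gen_of.
have sXD := gen_of_subG xD.
exists (restrm_morphism sXD f); split=> //; apply/isomP; split.
  exact: injm_restrm.
have sxX : [set x i | i : 'I_k] \subset D.
  by apply/subsetP => _ /imsetP[i _ ->].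
rewrite restrmEsub // /gen_of /= morphim_gen // morphimEsub // -imset_comp.
by congr <<_>>; apply: eq_imset => i /=.
Qed.

Lemma eq_assign_iso k (x x' y y' : 'I_k -> gT) :
  x =1 x' -> y =1 y' -> assign_iso x y -> assign_iso x' y'.
Proof.
move=> ex ey /assign_isoP[D [f [injf xD fx]]]; apply/assign_isoP.
by exists D, f; split=> // i; rewrite -?ex -?ey.
Qed.

Lemma assign_iso_refl k (x : 'I_k -> gT) : assign_iso x x.
Proof.
apply/assign_isoP; exists [set: gT]%G, [morphism of idm [set: gT]].
by split=> [|i|//]; rewrite ?injm_idm ?inE.
Qed.

Lemma assign_iso_order k (x y : 'I_k -> gT) i :
  assign_iso x y -> #[y i] = #[x i].
Proof. by case/assign_isoP=> D [f [injf xD fx]]; rewrite -fx order_injm. Qed.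

Lemma assign_iso_constt pi k (x y : 'I_k -> gT) :
  assign_iso x y -> assign_iso (fun i => (x i).`_pi) (fun i => (y i).`_pi).
Proof.
case/assign_isoP=> D [f [injf xD fx]]; apply/assign_isoP; exists D, f.
by split=> // i; rewrite ?groupX ?morph_constt ?fx.
Qed.

Lemma ext_in k (x : 'I_k -> gT) g (S : {set gT}) :
  (forall i, x i \in S) -> g \in S -> forall i, ext x g i \in S.
Proof. by move=> xS gS i; rewrite /ext; case: unlift. Qed.

Lemma ext_max k (x : 'I_k -> gT) g : ext x g ord_max = g.
Proof. by rewrite /ext unlift_none. Qed.

End AssignIso.

Lemma in_inj_stable_imset (T : finType) (Psi : T -> T) (S : {set T}) :
  {in S, forall g, Psi g \in S} -> {in S &, injective Psi} -> Psi @: S = S.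
Proof.
move=> PsiS injPsi; apply/eqP; rewrite eqEcard card_in_imset // leqnn andbT.
by apply/subsetP => _ /imsetP[g gS ->]; apply: PsiS.
Qed.

Lemma tuple_regular_trivg (gT : finGroupType) l (G : {group gT}) :
  G :=: 1 -> tuple_regular l G.
Proof.
move=> G1 x y; rewrite G1 => x1 y1 _.
exists id; split=> [|//|g g1]; first exact: imset_id.
apply: eq_assign_iso (assign_iso_refl (ext x g)) => // i.
by move: (ext_in x1 g1 i) (ext_in y1 g1 i); rewrite !inE => /eqP-> /eqP->.
Qed.

Lemma mem_dprod_pelt (gT : finGroupType) pi (A B G : {group gT}) x :
    A \x B = G -> pi.-group A -> pi^'.-group B -> x \in G ->
  (x \in A) = pi.-elt x.
Proof.
move=> defG piA pi'B; have [nsAG _] := dprod_normal2 defG.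
apply: (mem_normal_Hall _ nsAG); rewrite /pHall normal_sub //=.
by rewrite -divgS ?normal_sub // -(dprod_card defG) mulKn ?piA.
Qed.

Section PiDprod.
Variables (gT : finGroupType) (pi : nat_pred) (A B G : {group gT}).
Hypotheses (defG : A \x B = G) (piA : pi.-group A) (pi'B : pi^'.-group B).

Let defG' : B \x A = G. Proof. by rewrite dprodC. Qed.
Let pi''A : pi^'^'.-group A. Proof. by rewrite pgroupNK. Qed.

Lemma constt_dprodl x : x \in G -> x.`_pi \in A.
Proof.
by move=> xG; rewrite (mem_dprod_pelt defG piA) ?groupX ?p_elt_constt.
Qed.

Lemma constt_dprodr x : x \in G -> x.`_pi^' \in B.
Proof.
by move=> xG; rewrite (mem_dprod_pelt defG' pi'B) ?groupX ?p_elt_constt.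
Qed.

Lemma dprod_mulg_constt a b :
  a \in A -> b \in B -> (a * b).`_pi = a /\ (a * b).`_pi^' = b.
Proof.
move=> aA bB; have [_ _ cAB _] := dprodP defG.
have cab : commute a b by apply: commute_sym; apply: (centsP cAB).
have [pia pi'b] := (mem_p_elt piA aA, mem_p_elt pi'B bB).
have pi''a : pi^'^'.-elt a := mem_p_elt pi''A aA.
rewrite !consttM // (constt_p_elt pia) (constt_p_elt pi'b).
by rewrite (constt1P pi'b) (constt1P pi''a) mulg1 mul1g.
Qed.

Lemma assign_iso_dprod k (x y : 'I_k -> gT) :
    (forall i, x i \in G) -> (forall i, y i \in G) ->
    assign_iso (fun i => (x i).`_pi) (fun i => (y i).`_pi) ->
    assign_iso (fun i => (x i).`_pi^') (fun i => (y i).`_pi^') ->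
  assign_iso x y.
Proof.
move=> xG yG [fA [/isomP[injA imA] fAx]] [fB [/isomP[injB imB] fBx]].
have [_ _ cAB tiAB] := dprodP defG.
set XA := gen_of _ in fA imA injA fAx; set XB := gen_of _ in fB imB injB fBx.
set YA := gen_of _ in imA; set YB := gen_of _ in imB.
have [sXA sYA] : XA \subset A /\ YA \subset A.
  by split; apply: gen_of_subG => i; apply: constt_dprodl.
have [sXB sYB] : XB \subset B /\ YB \subset B.
  by split; apply: gen_of_subG => i; apply: constt_dprodr.
have tiXAB : XA :&: XB = 1 by apply/trivgP; rewrite -tiAB setISS.
have defX := dprodEY (subset_trans sXB (subset_trans cAB (centS sXA))) tiXAB.
have cYAB : fB @* XB \subset 'C(fA @* XA).
  by rewrite imA imB (subset_trans sYB (subset_trans cAB (centS sYA))).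
have injf : 'injm (dprodm defX cYAB).
  rewrite injm_dprodm injA injB imA imB; apply/eqP/trivgP.
  by rewrite -tiAB setISS.
apply/assign_isoP; exists (XA <*> XB)%G, [morphism of dprodm defX cYAB].
split=> // i; rewrite -(consttC pi (x i)).
  by rewrite groupM ?mem_gen ?inE ?mem_gen_of ?orbT.
by rewrite /= dprodmE ?mem_gen_of // fAx fBx consttC.
Qed.

Lemma tuple_regular_dprodl l : tuple_regular l G -> tuple_regular l A.
Proof.
have sAG : A \subset G by rewrite -(dprodW defG) mulG_subl.
have AG := subsetP sAG.
move=> regG x y xA yA xy; have [Psi [PsiG injPsi isoPsi]] :=
  regG x y (fun i => AG _ (xA i)) (fun i => AG _ (yA i)) xy.
exists Psi; split=> [||g gA]; last exact/isoPsi/AG.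
- apply: in_inj_stable_imset => [g gA|]; last exact: sub_in2 injPsi.
  have PsigG : Psi g \in G by rewrite -PsiG imset_f ?AG.
  rewrite (mem_dprod_pelt defG piA) // /p_elt.
  rewrite -(ext_max y (Psi g)) (assign_iso_order _ (isoPsi g (AG _ gA))).
  by rewrite ext_max; apply: mem_p_elt piA gA.
- exact: sub_in2 injPsi.
Qed.

Lemma tuple_regular_dprod l :
  tuple_regular l A -> tuple_regular l B -> tuple_regular l G.
Proof.
move=> regA regB x y xG yG xy.
have [PsiA [PsiAA injPsiA isoPsiA]] := regA _ _
  (fun i => constt_dprodl (xG i)) (fun i => constt_dprodl (yG i))
  (assign_iso_constt pi xy).
have [PsiB [PsiBB injPsiB isoPsiB]] := regB _ _
  (fun i => constt_dprodr (xG i)) (fun i => constt_dprodr (yG i))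
  (assign_iso_constt pi^' xy).
have PsiA_A a : a \in A -> PsiA a \in A by move=> aA; rewrite -PsiAA imset_f.
have PsiB_B b : b \in B -> PsiB b \in B by move=> bB; rewrite -PsiBB imset_f.
pose Psi g := PsiA g.`_pi * PsiB g.`_pi^'.
have PsiE g :
  g \in G -> (Psi g).`_pi = PsiA g.`_pi /\ (Psi g).`_pi^' = PsiB g.`_pi^'.
  move=> gG; apply: dprod_mulg_constt.
    exact/PsiA_A/constt_dprodl.
  exact/PsiB_B/constt_dprodr.
have PsiG g : g \in G -> Psi g \in G.
  move=> gG; rewrite -(dprodW defG) mem_mulg //.
    exact/PsiA_A/constt_dprodl.
  exact/PsiB_B/constt_dprodr.
have injPsi : {in G &, injective Psi}.
  move=> g h gG hG eqPsi; rewrite -(consttC pi g) -(consttC pi h).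
  have [[gA gB] [hA hB]] := (PsiE g gG, PsiE h hG); congr (_ * _).
    by apply: injPsiA; rewrite ?constt_dprodl // -gA -hA eqPsi.
  by apply: injPsiB; rewrite ?constt_dprodr // -gB -hB eqPsi.
exists Psi; split=> [||g gG]; [exact: in_inj_stable_imset | exact: injPsi |].
have [eqA eqB] := PsiE g gG.
apply: assign_iso_dprod; [exact: ext_in | exact: ext_in (PsiG _ gG) | |].
- apply: eq_assign_iso (isoPsiA _ (constt_dprodl gG)) => i;
    by rewrite /ext; case: unlift; rewrite ?eqA.
- apply: eq_assign_iso (isoPsiB _ (constt_dprodr gG)) => i;
    by rewrite /ext; case: unlift; rewrite ?eqB.
Qed.

End PiDprod.

Lemma tuple_regular_coprime_dprod (gT : finGroupType) l (A B G : {group gT}) :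
    A \x B = G -> coprime #|A| #|B| ->
  tuple_regular l G <-> tuple_regular l A /\ tuple_regular l B.
Proof.
move=> defG coAB; set pi := \pi(#|A|).
have piA : pi.-group A := pgroup_pi A.
have pi'B : pi^'.-group B by rewrite /pgroup -coprime_pi' ?cardG_gt0.
have defG' : B \x A = G by rewrite dprodC.
have pi''A : pi^'^'.-group A by rewrite pgroupNK.
split=> [regG | [regA regB]]; last exact: (tuple_regular_dprod defG piA pi'B).
by split; [exact: (tuple_regular_dprodl defG piA pi'B)
          | exact: (tuple_regular_dprodl defG' pi'B pi''A)].
Qed.

Theorem corollary3p3 (gT : finGroupType) (n l : nat) (G : {group gT})
    (Gs : 'I_n -> {group gT}) :
  \big[dprod/1]_(i < n) Gs i = G ->
  (forall i j : 'I_n, i != j -> coprime #|Gs i| #|Gs j|) ->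
  tuple_regular l G <-> (forall i : 'I_n, tuple_regular l (Gs i)).
Proof.
elim: n G Gs => [|n IHn] G Gs.
  rewrite big_ord0 => G1 _; split=> [_ [] // | _]; exact: tuple_regular_trivg.
rewrite big_ord_recl => defG coGs.
have [[_ H _ defH] _ _ _] := dprodP defG; rewrite defH in defG.
have coGsH : coprime #|Gs ord0| #|H|.
  rewrite -(bigdprod_card defH); apply: (big_ind (coprime _)) => [|m1 m2|i _].
  - exact: coprimen1.
  - by rewrite coprimeMr => -> ->.
  - exact: coGs.
have regH : tuple_regular l H <-> forall i, tuple_regular l (Gs (lift ord0 i)).
  by apply: IHn defH _ => i j neqij; apply: coGs; rewrite (inj_eq lift_inj).
apply: (iff_trans (tuple_regular_coprime_dprod l defG coGsH)).
split=> [[reg0 /regH regS] i | regGs].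
  by case: (unliftP ord0 i) => [j ->|->].
by split; [|apply/regH => i]; apply: regGs.
Qed.
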